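(* Let $\Gamma$ be an immersed, connected, $C^2$ planar curve with total curvature $\int_\Gamma|\kappa|\,ds\le\pi/4$. Then $\mathrm{Ent}[\Gamma]\le\sqrt{2}$.
   Context: $\kappa$ is the signed curvature and $ds$ arc length. For a curve $\Gamma$, $F_{x_0,\lambda}[\Gamma]=\frac{1}{\sqrt{4\pi\lambda}}\int_\Gamma e^{-|x-x_0|^2/(4\lambda)}\,ds$ (integral over the parametrization) and $\mathrm{Ent}[\Gamma]=\sup_{x_0\in\mathbb{R}^2,\lambda>0}F_{x_0,\lambda}[\Gamma]$. *)

From mathcomp Require Import all_boot all_order all_algebra.
From mathcomp Require Import all_classical all_reals all_analysis.
Set Implicit Arguments. Unset Strict Implicit. Unset Printing Implicit Defensive.
Import Order.TTheory GRing.Theory Num.Theory numFieldNormedType.Exports.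
Local Open Scope classical_set_scope.
Local Open Scope ring_scope.

Section Curves.
Variable R : realType.

(* A planar curve Gamma is given by a parameter interval I (open, nonempty,
   connected, possibly unbounded) and coordinate functions x, y : R -> R
   (only their values on I matter).  *)
Definition C2_immersed_curve (I : set R) (x y : R -> R) : Prop :=
  [/\ open I, is_interval I, I !=set0 &
    forall t, I t ->
      [/\ derivable x t 1 /\ derivable y t 1,
          derivable (derive1 x) t 1 /\ derivable (derive1 y) t 1,
          {for t, continuous (derive1n 2 x)} /\ {for t, continuous (derive1n 2 y)} &
          ((derive1 x) t) ^+ 2 + ((derive1 y) t) ^+ 2 != 0]].

Definition speed (x y : R -> R) (t : R) : R :=
  Num.sqrt (((derive1 x) t) ^+ 2 + ((derive1 y) t) ^+ 2).

Definition curvature (x y : R -> R) (t : R) : R :=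
  ((derive1 x) t * (derive1n 2 y) t - (derive1 y) t * (derive1n 2 x) t) / (speed x y t) ^+ 3.

Definition total_curvature (I : set R) (x y : R -> R) : \bar R :=
  (\int[lebesgue_measure]_(t in I) (`|curvature x y t| * speed x y t)%:E)%E.

Definition Ffun (I : set R) (x y : R -> R) (p q lam : R) : \bar R :=
  ((Num.sqrt (4 * pi * lam))^-1%:E *
   \int[lebesgue_measure]_(t in I)
      (expR (- (((x t - p) ^+ 2 + (y t - q) ^+ 2) / (4 * lam))) * speed x y t)%:E)%E.

Definition Ent (I : set R) (x y : R -> R) : \bar R :=
  ereal_sup [set v | exists (p q lam : R), 0 < lam /\ v = Ffun I x y p q lam].
End Curves.

From mathcomp Require Import all_boot all_order all_algebra.
From mathcomp Require Import all_classical all_reals all_analysis.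
From mathcomp Require Import measurable_realfun ring lra.
Set Implicit Arguments. Unset Strict Implicit. Unset Printing Implicit Defensive.
Import Order.TTheory GRing.Theory Num.Theory numFieldNormedType.Exports.
Local Open Scope classical_set_scope.
Local Open Scope ring_scope.

(* Fix x0 = (p, q) and lam > 0.  On a segment [a, b] of the parameter interval
   the unit tangent T turns by at most pi/4; measured from the parameter c at
   which half of this turning has happened, T stays within distance pi/8 < 1/2
   of e := T(c), hence e . gamma' >= 7/8 |gamma'|.  The coordinate
   Phi := e . (gamma - x0) / sqrt(4 lam) is then increasing, with
   Phi' >= 7/8 |gamma'| / sqrt(4 lam) and |gamma - x0|^2 / (4 lam) >= Phi^2, so
   the substitution u = Phi(t) bounds the Gaussian length of gamma on [a, b] by
   8/7 sqrt(4 lam) int exp(-u^2) du = 8/7 sqrt(4 pi lam).  Exhausting the open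
   parameter interval by segments gives F_{x0,lam} <= 8/7 < sqrt 2. *)

Section open_interval_exhaustion.
Context {R : realType} (I : set R).
Hypotheses (oI : open I) (iI : is_interval I).
Local Notation mu := (@lebesgue_measure R).

(* [inner_itv n] is the set of points of [I] at distance at least [1/(n+1)] from
   its complement, cut to [[-n, n]]; its closure is a segment inside [I]. *)
Definition inner_itv (n : nat) : set R :=
  [set t | I (t - n.+1%:R^-1) /\ I (t + n.+1%:R^-1) /\ - n%:R <= t <= n%:R].

Let inv_gt0 n : 0 < n.+1%:R^-1 :> R. Proof. by rewrite invr_gt0. Qed.

Lemma inner_itv_interval n : is_interval (inner_itv n).
Proof.
move=> u v [Iu1 [Iu2 /andP[u1 u2]]] [Iv1 [Iv2 /andP[v1 v2]]] z /andP[uz zv].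
split; [|split].
- by apply: (iI Iu1 Iv1); rewrite !lerD2r uz zv.
- by apply: (iI Iu2 Iv2); rewrite !lerD2r uz zv.
- by rewrite (le_trans u1 uz) (le_trans zv v2).
Qed.

Lemma inner_itv_sub n : inner_itv n `<=` I.
Proof.
move=> t [I1 [I2 _]]; apply: (iI I1 I2).
by have := inv_gt0 n; rewrite gerBl lerDl => /ltW ->.
Qed.

Lemma inner_itv_nondecreasing : nondecreasing_seq inner_itv.
Proof.
apply/nondecreasing_seqP => n; rewrite subsetEset => t [I1 [I2 /andP[t1 t2]]].
have d12 : n.+2%:R^-1 <= n.+1%:R^-1 :> R by rewrite lef_pV2 ?posrE ?ltr0n // ler_nat.
have d0 := inv_gt0 n.+1.
split; [|split]; last by rewrite (le_trans _ t1) ?(le_trans t2) ?lerN2 ?ler_nat.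
- apply: (iI I1 I2); move: d12 d0; move: (n.+1%:R^-1) (n.+2%:R^-1) => d d' *.
  by apply/andP; split; lra.
- apply: (iI I1 I2); move: d12 d0; move: (n.+1%:R^-1) (n.+2%:R^-1) => d d' *.
  by apply/andP; split; lra.
Qed.

Lemma bigcup_inner_itv : \bigcup_n inner_itv n = I.
Proof.
apply/seteqP; split => [t [n _ /inner_itv_sub //]|t It].
have [e /= e0 He] : exists2 e : R, 0 < e & ball t e `<=` I.
  by apply/nbhs_ballP; rewrite nbhsE /=; exists I.
have small : \forall n \near \oo, n.+1%:R^-1 < e by exact: near_infty_natSinv_lt (PosNum e0).
have [N _ HN] : \forall n \near \oo, inner_itv n t.
  near=> n; split; [|split].
  - apply: He; rewrite /ball /= opprB addrC subrK ger0_norm ?ltW //.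
    by near: n.
  - apply: He; rewrite /ball /= opprD addrA subrr sub0r normrN ger0_norm ?ltW //.
    by near: n.
  - by rewrite -ler_norml; near: n; exact: nbhs_infty_ger.
by exists N => //; apply: HN => /=.
Unshelve. all: by end_near.
Qed.

Lemma inner_itv_sub_segment n : inner_itv n !=set0 ->
  exists a b, [/\ I a, I b & inner_itv n `<=` `[a, b]].
Proof.
move=> ne.
have hl : has_lbound (inner_itv n) by exists (- n%:R) => t [_ [_ /andP[]]].
have hu : has_ubound (inner_itv n) by exists n%:R => t [_ [_ /andP[]]].
exists (inf (inner_itv n)), (sup (inner_itv n)); split.
- have [t Jt tinf] := inf_adherent (inv_gt0 n) (conj ne hl).
  have [I1 _] := Jt; apply: (iI I1 (inner_itv_sub Jt)).
  by apply/andP; split; [rewrite lerBlDr ltW | exact: ge_inf].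
- have [t Jt tsup] := sup_adherent (inv_gt0 n) (conj ne hu).
  have [_ [I2 _]] := Jt; apply: (iI (inner_itv_sub Jt) I2).
  by apply/andP; split; [exact: ub_le_sup | rewrite -lerBlDr ltW].
- by move=> t Jt; rewrite /= in_itv /=; apply/andP; split; [exact: ge_inf | exact: ub_le_sup].
Qed.

Lemma ge0_integral_le_segments (f : R -> R) (C : \bar R) :
  (forall t, I t -> 0 <= f t) -> measurable_fun I f -> (0 <= C)%E ->
  (forall a b, I a -> I b -> a <= b -> (\int[mu]_(t in `[a, b]) (f t)%:E <= C)%E) ->
  (\int[mu]_(t in I) (f t)%:E <= C)%E.
Proof.
move=> f0 mf C0 segC.
have mI : measurable I by exact: is_interval_measurable.
have mJ n : measurable (inner_itv n) by apply: is_interval_measurable; exact: inner_itv_interval.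
have mfE : measurable_fun I (EFin \o f) by exact/measurable_EFinP.
have cv : (\int[mu]_(t in inner_itv n) (f t)%:E)%E @[n --> \oo] -->
    (\int[mu]_(t in \bigcup_n inner_itv n) (f t)%:E)%E.
  apply: ge0_nondecreasing_set_cvg_integral => //.
  - exact: inner_itv_nondecreasing.
  - by move=> n; apply: measurable_funS mfE => //; exact: inner_itv_sub.
  - by move=> n t /inner_itv_sub It; rewrite lee_fin f0.
rewrite -bigcup_inner_itv -(cvg_lim _ cv) //.
apply: lime_le; first by apply/cvg_ex; eexists; exact: cv.
apply: nearW => n /=.
have [ne|empty] := pselect (inner_itv n !=set0); last first.
  rewrite (_ : inner_itv n = set0) ?integral_set0 //.
  by apply/seteqP; split => // t Jt; apply: empty; exists t.
have [a [b [Ia Ib Jab]]] := inner_itv_sub_segment ne.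
have ab : a <= b by case: ne => t /Jab; rewrite /= in_itv /= => /andP[]; exact: le_trans.
have abI : `[a, b] `<=` I by move=> t; rewrite /= in_itv /= => tab; exact: (iI Ia Ib tab).
apply: le_trans (segC a b Ia Ib ab); apply: ge0_subset_integral => //.
- exact: mJ.
- exact: measurable_funS mfE.
- by move=> t /abI It; rewrite lee_fin f0.
Qed.

End open_interval_exhaustion.

Lemma derive1n2 {R : realType} (f : R -> R) : derive1n 2 f = derive1 (derive1 f).
Proof. by rewrite derive1nS derive1n1. Qed.

Lemma derivable1_continuous {R : realType} (f : R -> R) t :
  derivable f t 1 -> {for t, continuous f}.
Proof. by move=> /derivable1_diffP /differentiable_continuous. Qed.

Section derivative_comparison.
Context {R : realType}.
Implicit Types (f g df dg : R -> R) (a b : R).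

Lemma is_derive_sub_le f g df dg a b : a <= b ->
  (forall u, u \in `]a, b[ -> is_derive u 1 f (df u)) ->
  (forall u, u \in `]a, b[ -> is_derive u 1 g (dg u)) ->
  {within `[a, b], continuous f} -> {within `[a, b], continuous g} ->
  (forall u, u \in `]a, b[ -> df u <= dg u) ->
  f b - f a <= g b - g a.
Proof.
move=> ab f_df g_dg cf cg dfg.
have gf_dgf u : u \in `]a, b[ -> is_derive u 1 (g - f) (dg u - df u).
  by move=> uab; exact: is_deriveB (g_dg u uab) (f_df u uab).
have : (g - f) a <= (g - f) b.
  apply: (@ger0_derive1_ndecr _ (g - f) a b) => //.
  - by move=> u /gf_dgf [].
  - by move=> u uab; rewrite derive1E; case: (gf_dgf u uab) => _ ->; rewrite subr_ge0 dfg.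
  - by move=> u; apply: cvgB; [exact: cg | exact: cf].
rewrite !fctE; lra.
Qed.

Lemma is_derive_dist_le f g df dg a b : a <= b ->
  (forall u, u \in `]a, b[ -> is_derive u 1 f (df u)) ->
  (forall u, u \in `]a, b[ -> is_derive u 1 g (dg u)) ->
  {within `[a, b], continuous f} -> {within `[a, b], continuous g} ->
  (forall u, u \in `]a, b[ -> `|df u| <= dg u) ->
  `|f b - f a| <= g b - g a.
Proof.
move=> ab f_df g_dg cf cg dfg; rewrite ler_norml; apply/andP; split.
- have : (- f) b - (- f) a <= g b - g a.
    apply: (@is_derive_sub_le (- f) g (- df) dg) => //.
    + by move=> u uab; exact: is_deriveN (f_df u uab).
    + by move=> u; apply: cvgN; exact: cf.
    + move=> u uab; apply: le_trans (dfg u uab); by rewrite fctE -normrN ler_norm.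
  rewrite !fctE; lra.
- apply: is_derive_sub_le => // u uab.
  exact: le_trans (ler_norm _) (dfg u uab).
Qed.

End derivative_comparison.

Lemma gauss_comp_integral_le {R : realType} (P : R -> R) (a b : R) : a <= b ->
  (forall t, t \in `[a, b] ->
    [/\ derivable P t 1, {for t, continuous (derive1 P)} & 0 < derive1 P t]) ->
  (\int[lebesgue_measure]_(t in `[a, b]) (expR (- P t ^+ 2) * derive1 P t)%:E
    <= (Num.sqrt pi)%:E)%E.
Proof.
move=> ab hP.
have oo_cc t : t \in `]a, b[ -> t \in `[a, b] by apply: subset_itv_oo_cc.
have dP t : t \in `[a, b] -> derivable P t 1 by case/hP.
have cP : {within `[a, b], continuous P} by apply: derivable_within_continuous.
have cP' t : t \in `[a, b] -> {for t, continuous (derive1 P)} by case/hP.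
have incrP : {in `[a, b] &, {homo P : u v / u < v}}.
  apply: gtr0_derive1_lt_cc => //.
  - by move=> t /oo_cc /dP.
  - by move=> t /oo_cc /hP[].
have a_ab : a \in `[a, b] by rewrite in_itv /= lexx ab.
have b_ab : b \in `[a, b] by rewrite in_itv /= lexx ab.
have diffP : derivable_oo_LRcontinuous P a b.
  split; first by move=> t /oo_cc /dP.
  - exact/cvg_at_right_filter/derivable1_continuous/dP.
  - exact/cvg_at_left_filter/derivable1_continuous/dP.
rewrite -(@integration_by_substitution_increasing R P gauss_fun a b ab incrP).
- rewrite -integralT_gauss; apply: ge0_subset_integral => //.
  + by apply/measurable_EFinP; exact: measurable_gauss_fun.
  + by move=> t _; rewrite lee_fin gauss_fun_ge0.
- by move=> t /oo_cc /cP'.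
- by apply/cvg_ex; exists (derive1 P a); apply: cvg_at_right_filter; exact: cP' a_ab.
- by apply/cvg_ex; exists (derive1 P b); apply: cvg_at_left_filter; exact: cP' b_ab.
- exact: diffP.
- by apply: continuous_subspaceT; exact: continuous_gauss_fun.
Qed.

Lemma sqr_le_quarter {R : realType} (r : R) : 0 <= r ->
  r ^+ 2 <= r * (pi / 8) -> r ^+ 2 <= 4^-1.
Proof.
move=> r0 le_r; have pi_lt4 : pi < 4 :> R by have := @pihalf_lt2 R; lra.
have [->|r_neq0] := eqVneq r 0; first by rewrite expr2 mul0r invr_ge0 ler0n.
have r_gt0 : 0 < r by rewrite lt_def r_neq0 r0.
have : r <= pi / 8 by rewrite -(ler_pM2l r_gt0) -expr2.
nra.
Qed.

Lemma expR_sqr_proj_le {R : realType} (e1 e2 u v lam : R) :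
  e1 ^+ 2 + e2 ^+ 2 = 1 -> 0 < lam ->
  expR (- ((u ^+ 2 + v ^+ 2) / (4 * lam)))
    <= expR (- ((Num.sqrt (4 * lam))^-1 * (e1 * u + e2 * v)) ^+ 2).
Proof.
move=> e_unit lam0; have lam4 : 0 < 4 * lam by rewrite mulr_gt0.
rewrite ler_expR lerN2 exprMn exprVn sqr_sqrtr ?(ltW lam4) // mulrC ler_pM2r ?invr_gt0 //.
rewrite -subr_ge0 (_ : _ - _ = (u ^+ 2 + v ^+ 2) * (1 - (e1 ^+ 2 + e2 ^+ 2))
                              + (e2 * u - e1 * v) ^+ 2); last by ring.
by rewrite e_unit subrr mulr0 add0r sqr_ge0.
Qed.

Section immersed_curve.
Variables (R : realType) (I : set R) (x y : R -> R).
Hypothesis curveC2 : C2_immersed_curve I x y.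

Local Notation x' := (derive1 x).
Local Notation y' := (derive1 y).
Local Notation x'' := (derive1 (derive1 x)).
Local Notation y'' := (derive1 (derive1 y)).
Local Notation s := (speed x y).
Local Notation mu := (@lebesgue_measure R).

Lemma open_param : open I. Proof. by case: curveC2. Qed.
Lemma interval_param : is_interval I. Proof. by case: curveC2. Qed.

Let regular t : I t -> _ := fun It => let: And4 _ _ _ h := curveC2 in h t It.

Lemma is_derive_x t : I t -> is_derive t 1 x (x' t).
Proof. by move=> /regular [[dx _] _ _ _]; rewrite derive1E; exact: derivableP. Qed.
Lemma is_derive_y t : I t -> is_derive t 1 y (y' t).
Proof. by move=> /regular [[_ dy] _ _ _]; rewrite derive1E; exact: derivableP. Qed.
Lemma is_derive_x' t : I t -> is_derive t 1 x' (x'' t).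
Proof. by move=> /regular [_ [dx' _] _ _]; rewrite derive1E; exact: derivableP. Qed.
Lemma is_derive_y' t : I t -> is_derive t 1 y' (y'' t).
Proof. by move=> /regular [_ [_ dy'] _ _]; rewrite derive1E; exact: derivableP. Qed.

Lemma continuous_x'' t : I t -> {for t, continuous x''}.
Proof. by move=> /regular [_ _ [+ _] _]; rewrite derive1n2. Qed.
Lemma continuous_y'' t : I t -> {for t, continuous y''}.
Proof. by move=> /regular [_ _ [_ +] _]; rewrite derive1n2. Qed.

Lemma sqr_velocity_gt0 t : I t -> 0 < x' t ^+ 2 + y' t ^+ 2.
Proof.
move=> It; have [_ _ _ nz] := regular It.
by rewrite lt_neqAle eq_sym nz addr_ge0 ?sqr_ge0.
Qed.

Lemma speed_ge0 t : 0 <= s t. Proof. exact: sqrtr_ge0. Qed.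

Lemma speed_gt0 t : I t -> 0 < s t.
Proof. by move=> It; rewrite sqrtr_gt0 sqr_velocity_gt0. Qed.

Lemma sqr_speed t : I t -> s t ^+ 2 = x' t ^+ 2 + y' t ^+ 2.
Proof. by move=> It; rewrite sqr_sqrtr // ltW // sqr_velocity_gt0. Qed.

Lemma is_derive_speed t : I t ->
  is_derive t 1 s ((x' t * x'' t + y' t * y'' t) / s t).
Proof.
move=> It.
have dQ : is_derive t 1 (x' ^+ 2 + y' ^+ 2) (2 * (x' t * x'' t + y' t * y'' t)).
  apply: is_derive_eq (is_deriveD (is_deriveX 2 (is_derive_x' It))
                                   (is_deriveX 2 (is_derive_y' It))) _.
  rewrite /GRing.scale /= !expr1.
  by move: (x' t) (y' t) (x'' t) (y'' t) => ? ? ? ?; ring.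
have := @is_derive1_comp _ Num.sqrt (x' ^+ 2 + y' ^+ 2) t _ _
  (is_derive1_sqrt (sqr_velocity_gt0 It)) dQ.
have -> : Num.sqrt \o (x' ^+ 2 + y' ^+ 2) = s by apply/funext => u; rewrite /= !fctE.
move=> ds; apply: is_derive_eq ds _.
have := speed_gt0 It; rewrite /speed.
move: (x' t) (y' t) (x'' t) (y'' t) (Num.sqrt _) => ? ? ? ? S S0.
by field; rewrite gt_eqF.
Qed.

Definition cross t := x' t * y'' t - y' t * x'' t.
Definition tangent1 t := x' t / s t.
Definition tangent2 t := y' t / s t.
Definition tangent_dot (D1 D2 : R) t := D1 * tangent1 t + D2 * tangent2 t.

Lemma tangent_sqr_norm t : I t -> tangent1 t ^+ 2 + tangent2 t ^+ 2 = 1.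
Proof.
move=> It; rewrite !expr_div_n -mulrDl -sqr_speed // divff //.
by rewrite gt_eqF // exprn_gt0 // speed_gt0.
Qed.

Lemma is_derive_inv_speed t : I t ->
  is_derive t 1 (fun u => (s u)^-1) (- (s t) ^- 2 * ((x' t * x'' t + y' t * y'' t) / s t)).
Proof. by move=> It; exact: is_deriveV (lt0r_neq0 (speed_gt0 It)) (is_derive_speed It). Qed.

Lemma is_derive_tangent1 t : I t ->
  is_derive t 1 tangent1 (- y' t * cross t / s t ^+ 3).
Proof.
move=> It; apply: is_derive_eq (is_deriveM (is_derive_x' It) (is_derive_inv_speed It)) _.
rewrite /cross /GRing.scale /= [s t ^+ 3]exprS [_ * s t ^+ 2]mulrC sqr_speed //.
have := speed_gt0 It; have := sqr_velocity_gt0 It.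
move: (x' t) (y' t) (x'' t) (y'' t) (s t) => ? ? ? ? ? ? ?.
by field; rewrite !gt_eqF.
Qed.

Lemma is_derive_tangent2 t : I t ->
  is_derive t 1 tangent2 (x' t * cross t / s t ^+ 3).
Proof.
move=> It; apply: is_derive_eq (is_deriveM (is_derive_y' It) (is_derive_inv_speed It)) _.
rewrite /cross /GRing.scale /= [s t ^+ 3]exprS [_ * s t ^+ 2]mulrC sqr_speed //.
have := speed_gt0 It; have := sqr_velocity_gt0 It.
move: (x' t) (y' t) (x'' t) (y'' t) (s t) => ? ? ? ? ? ? ?.
by field; rewrite !gt_eqF.
Qed.

Lemma is_derive_tangent_dot D1 D2 t : I t ->
  is_derive t 1 (tangent_dot D1 D2) (cross t * (D2 * x' t - D1 * y' t) / s t ^+ 3).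
Proof.
move=> It; apply: is_derive_eq (is_deriveD (is_deriveZ D1 (is_derive_tangent1 It))
                                           (is_deriveZ D2 (is_derive_tangent2 It))) _.
rewrite /GRing.scale /=; have := speed_gt0 It.
move: (x' t) (y' t) (cross t) (s t) => ? ? ? ? ?.
by field; rewrite gt_eqF.
Qed.

Definition curv_ds t := `|curvature x y t| * s t.

Lemma curvatureE t : curvature x y t = cross t / s t ^+ 3.
Proof. by rewrite /curvature /cross !derive1n2. Qed.

Lemma curv_ds_ge0 t : 0 <= curv_ds t.
Proof. by rewrite mulr_ge0 ?speed_ge0. Qed.

Lemma continuous_x t : I t -> {for t, continuous x}.
Proof. by move=> /is_derive_x []/derivable1_continuous. Qed.
Lemma continuous_y t : I t -> {for t, continuous y}.
Proof. by move=> /is_derive_y []/derivable1_continuous. Qed.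
Lemma continuous_x' t : I t -> {for t, continuous x'}.
Proof. by move=> /is_derive_x' []/derivable1_continuous. Qed.
Lemma continuous_y' t : I t -> {for t, continuous y'}.
Proof. by move=> /is_derive_y' []/derivable1_continuous. Qed.
Lemma continuous_speed t : I t -> {for t, continuous s}.
Proof. by move=> /is_derive_speed []/derivable1_continuous. Qed.
Lemma continuous_tangent_dot D1 D2 t : I t -> {for t, continuous (tangent_dot D1 D2)}.
Proof. by move=> /(is_derive_tangent_dot D1 D2) []/derivable1_continuous. Qed.

Lemma continuous_cross t : I t -> {for t, continuous cross}.
Proof.
move=> It; apply: cvgB; apply: cvgM.
- exact: continuous_x'.
- exact: continuous_y''.
- exact: continuous_y'.
- exact: continuous_x''.
Qed.

Lemma continuous_curv_ds t : I t -> {for t, continuous curv_ds}.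
Proof.
move=> It; rewrite /curv_ds (_ : curvature x y = fun u => cross u / s u ^+ 3); last first.
  by apply/funext => u; rewrite curvatureE.
apply: cvgM; last exact: continuous_speed.
apply: cvg_norm; apply: cvgM; first exact: continuous_cross.
apply: cvgV; first by rewrite expf_neq0 // gt_eqF // speed_gt0.
exact: (continuous_comp (continuous_speed It) (@exprn_continuous _ 3 _)).
Qed.

Lemma norm_derive_tangent_dot_le D1 D2 t : I t ->
  `|cross t * (D2 * x' t - D1 * y' t) / s t ^+ 3|
    <= Num.sqrt (D1 ^+ 2 + D2 ^+ 2) * curv_ds t.
Proof.
move=> It; have s0 := speed_gt0 It.
have rotD : `|D2 * x' t - D1 * y' t| <= Num.sqrt (D1 ^+ 2 + D2 ^+ 2) * s t.
  rewrite -sqrtr_sqr /speed -sqrtrM ?addr_ge0 ?sqr_ge0 // ler_wsqrtr //.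
  rewrite -subr_ge0 (_ : _ - _ = (D1 * x' t + D2 * y' t) ^+ 2) ?sqr_ge0 //.
  by ring.
have -> : `|cross t * (D2 * x' t - D1 * y' t) / s t ^+ 3|
    = `|cross t| / s t ^+ 3 * `|D2 * x' t - D1 * y' t|.
  by rewrite !normrM normfV normrX (gtr0_norm s0) mulrAC.
have -> : Num.sqrt (D1 ^+ 2 + D2 ^+ 2) * curv_ds t
    = `|cross t| / s t ^+ 3 * (Num.sqrt (D1 ^+ 2 + D2 ^+ 2) * s t).
  rewrite /curv_ds curvatureE normrM normfV normrX (gtr0_norm s0).
  by move: `|cross t| (s t ^+ 3)^-1 (s t) (Num.sqrt _) => *; ring.
by apply: ler_wpM2l rotD; rewrite divr_ge0 ?exprn_ge0 ?speed_ge0.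
Qed.

Lemma segment_sub a b t : I a -> I b -> t \in `[a, b] -> I t.
Proof. by move=> Ia Ib; rewrite in_itv /=; exact: interval_param Ia Ib t. Qed.

Lemma within_segment_continuous (f : R -> R) a b : I a -> I b ->
  (forall t, I t -> {for t, continuous f}) -> {within `[a, b], continuous f}.
Proof.
move=> Ia Ib cf; apply: continuous_in_subspaceT => t; rewrite inE => tab.
exact/cf/(segment_sub Ia Ib).
Qed.

Lemma integrable_segment (f : R -> R) a b : I a -> I b ->
  (forall t, I t -> {for t, continuous f}) -> mu.-integrable `[a, b] (EFin \o f).
Proof.
move=> Ia Ib cf; apply: continuous_compact_integrable; first exact: segment_compact.
exact: within_segment_continuous.
Qed.

Lemma integrable_curv_ds a b : I a -> I b -> mu.-integrable `[a, b] (EFin \o curv_ds).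
Proof. by move=> Ia Ib; apply: integrable_segment => //; exact: continuous_curv_ds. Qed.

Definition turning a u := (\int[mu]_(t in `[a, u]) curv_ds t)%R.

Lemma turning_id a : turning a a = 0.
Proof. by rewrite /turning set_itv1 Rintegral_set1. Qed.

Lemma continuous_turning a b : I a -> I b -> a <= b ->
  {within `[a, b], continuous (turning a)}.
Proof.
by move=> Ia Ib ab; apply: parameterized_integral_continuous => //; exact: integrable_curv_ds.
Qed.

Lemma is_derive_turning a b t : I a -> I b -> t \in `]a, b[ ->
  is_derive t 1 (turning a) (curv_ds t).
Proof.
move=> Ia Ib tab; have It := segment_sub Ia Ib (subset_itv_oo_cc tab).
move: tab; rewrite in_itv /= => /andP[at_ tb].
have [dturn <-] :=
  continuous_FTC1_closed tb (integrable_curv_ds Ia Ib) at_ (continuous_curv_ds It).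
by rewrite derive1E; exact: derivableP.
Qed.

Lemma turning_le a b u v : I a -> I b -> a <= b ->
  a <= u -> u <= v -> v <= b -> turning a u <= turning a v.
Proof.
move=> Ia Ib ab; apply: ger0_derive1_ndecr; last exact: continuous_turning.
- by move=> t /(is_derive_turning Ia Ib) [].
- move=> t tab; rewrite derive1E.
  by case: (is_derive_turning Ia Ib tab) => _ ->; exact: curv_ds_ge0.
Qed.

Lemma turning_le_total_curvature a b : I a -> I b ->
  ((turning a b)%:E <= total_curvature I x y)%E.
Proof.
move=> Ia Ib.
have mI : measurable I by exact: is_interval_measurable interval_param.
have int_le : (\int[mu]_(t in `[a, b]) (curv_ds t)%:E <= total_curvature I x y)%E.
  apply: ge0_subset_integral => //.
  - apply/measurable_EFinP; apply: subspace_continuous_measurable_fun => //.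
    apply: continuous_in_subspaceT => t; rewrite inE; exact: continuous_curv_ds.
  - by move=> t _; rewrite lee_fin curv_ds_ge0.
  - by move=> t; exact: segment_sub.
have int_ge0 : (0 <= \int[mu]_(t in `[a, b]) (curv_ds t)%:E)%E.
  by apply: integral_ge0 => t _; rewrite lee_fin curv_ds_ge0.
rewrite /turning /Rintegral; move: int_le int_ge0.
by case: (\int[mu]_(t in `[a, b]) _)%E => //= le ge0; exact: le_trans ge0 le.
Qed.

Lemma tangent_dot_dist_le a b D1 D2 t c : I a -> I b -> a <= b ->
  t \in `[a, b] -> c \in `[a, b] ->
  `|tangent_dot D1 D2 t - tangent_dot D1 D2 c|
    <= Num.sqrt (D1 ^+ 2 + D2 ^+ 2) * `|turning a t - turning a c|.
Proof.
move=> Ia Ib ab; wlog ct : t c / c <= t.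
  move=> wlog_ct tab cab; have [ct|/ltW tc] := leP c t; first exact: wlog_ct.
  by rewrite distrC [`|turning a t - _|]distrC; exact: wlog_ct.
rewrite !in_itv /= => /andP[_ tb] /andP[ac _].
set r := Num.sqrt (D1 ^+ 2 + D2 ^+ 2).
have sub_oo u : u \in `]c, t[ -> u \in `]a, b[.
  by rewrite !in_itv /= => /andP[cu ut]; rewrite (le_lt_trans ac cu) (lt_le_trans ut tb).
have Iu u : u \in `]c, t[ -> I u.
  by move=> /sub_oo /subset_itv_oo_cc; exact: segment_sub.
have sub_cc : `[c, t] `<=` `[a, b] by apply: subset_itv; rewrite bnd_simp.
rewrite [`|turning a t - _|]ger0_norm ?subr_ge0 ?(turning_le Ia Ib ab ac ct tb) // mulrBr.
apply: (@is_derive_dist_le _ (tangent_dot D1 D2) (fun u => r * turning a u) _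
  (fun u => r * curv_ds u) c t ct).
- by move=> u /Iu; exact: is_derive_tangent_dot.
- move=> u /sub_oo uab.
  rewrite (_ : (fun u => r * turning a u) = r *: turning a) //.
  exact: is_derive_eq (is_deriveZ r (is_derive_turning Ia Ib uab)) _.
- exact/(continuous_subspaceW sub_cc)/within_segment_continuous/continuous_tangent_dot.
- move=> u; apply: cvgM; first exact: cvg_cst.
  exact: continuous_subspaceW sub_cc (continuous_turning Ia Ib ab) u.
- by move=> u /Iu; exact: norm_derive_tangent_dot_le.
Qed.

Lemma tangent_cone a b : I a -> I b -> a <= b -> turning a b <= pi / 4 ->
  exists2 e : R * R, e.1 ^+ 2 + e.2 ^+ 2 = 1 &
    forall t, t \in `[a, b] -> 7 / 8 * s t <= e.1 * x' t + e.2 * y' t.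
Proof.
move=> Ia Ib ab turn_b.
have turn_b0 : 0 <= turning a b by rewrite -(turning_id a) (turning_le Ia Ib ab).
have [c cab turn_c] : exists2 c, c \in `[a, b] & turning a c = turning a b / 2.
  apply: IVT => //; first exact: continuous_turning.
  rewrite turning_id ge_min le_max; apply/andP; split; apply/orP; [left|right]; lra.
have Ic := segment_sub Ia Ib cab.
exists (tangent1 c, tangent2 c) => /=; first exact: tangent_sqr_norm.
move=> t tab; have It := segment_sub Ia Ib tab.
set D1 := tangent1 t - tangent1 c; set D2 := tangent2 t - tangent2 c.
have turn_tc : `|turning a t - turning a c| <= pi / 8.
  move: (tab); rewrite in_itv /= => /andP[at_ tb].
  have := turning_le Ia Ib ab (lexx a) at_ tb.
  have := turning_le Ia Ib ab at_ tb (lexx b).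
  rewrite turning_id turn_c ler_norml => ? ?; apply/andP; split; lra.
have dot_diff : tangent_dot D1 D2 t - tangent_dot D1 D2 c = D1 ^+ 2 + D2 ^+ 2.
  rewrite /tangent_dot /D1 /D2.
  by move: (tangent1 t) (tangent2 t) (tangent1 c) (tangent2 c) => *; ring.
(* D . T(t) - D . T(c) = |D|^2 for D := T(t) - T(c), so the mean value
   inequality for D . T gives |D|^2 <= |D| pi/8. *)
have N_le : D1 ^+ 2 + D2 ^+ 2 <= Num.sqrt (D1 ^+ 2 + D2 ^+ 2) * (pi / 8).
  rewrite -{1}dot_diff; apply: le_trans (ler_norm _) _.
  apply: le_trans (tangent_dot_dist_le D1 D2 Ia Ib ab tab cab) _.
  by apply: ler_wpM2l turn_tc; exact: sqrtr_ge0.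
have N_quarter : D1 ^+ 2 + D2 ^+ 2 <= 4^-1.
  have N0 : 0 <= D1 ^+ 2 + D2 ^+ 2 by rewrite addr_ge0 ?sqr_ge0.
  rewrite -(sqr_sqrtr N0); apply: sqr_le_quarter; first exact: sqrtr_ge0.
  by rewrite sqr_sqrtr.
have cos_ge : 7 / 8 <= tangent1 c * tangent1 t + tangent2 c * tangent2 t.
  move: N_quarter (tangent_sqr_norm It) (tangent_sqr_norm Ic); rewrite /D1 /D2.
  move: (tangent1 t) (tangent2 t) (tangent1 c) (tangent2 c) => A B C D N1 U1 U0.
  have E : (A - C) ^+ 2 + (B - D) ^+ 2
      = A ^+ 2 + B ^+ 2 + (C ^+ 2 + D ^+ 2) - 2 * (C * A + D * B) by ring.
  rewrite E U1 U0 in N1; lra.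
have s0 := speed_gt0 It.
have -> : tangent1 c * x' t + tangent2 c * y' t
    = s t * (tangent1 c * tangent1 t + tangent2 c * tangent2 t).
  by rewrite /tangent1 /tangent2; move: (_ / s c) (_ / s c) => *; field; rewrite gt_eqF.
by rewrite [X in _ <= X]mulrC ler_pM2r.
Qed.

Lemma continuous_eq_on_param (f g : R -> R) t : I t -> (forall u, I u -> f u = g u) ->
  {for t, continuous g} -> {for t, continuous f}.
Proof.
move=> It fg cg; rewrite /prop_for /continuous_at (fg t It).
apply: cvg_trans _ cg; apply: near_eq_cvg; near=> u; apply/esym/fg.
by near: u; move: open_param; rewrite openE => /(_ t It).
Unshelve. all: by end_near.
Qed.

Definition projection (e1 e2 p q c : R) t := c^-1 * (e1 * (x t - p) + e2 * (y t - q)).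

Lemma is_derive_projection e1 e2 p q c t : I t ->
  is_derive t 1 (projection e1 e2 p q c) (c^-1 * (e1 * x' t + e2 * y' t)).
Proof.
move=> It.
have dx := is_deriveB (is_derive_x It) (is_derive_cst p t 1).
have dy := is_deriveB (is_derive_y It) (is_derive_cst q t 1).
apply: is_derive_eq (is_deriveZ c^-1 (is_deriveD (is_deriveZ e1 dx) (is_deriveZ e2 dy))) _.
by rewrite /GRing.scale /= !subr0.
Qed.

Lemma continuous_derive1_projection e1 e2 p q c t : I t ->
  {for t, continuous (derive1 (projection e1 e2 p q c))}.
Proof.
move=> It; apply: (@continuous_eq_on_param _ (fun u => c^-1 * (e1 * x' u + e2 * y' u))) => //.
  by move=> u Iu; rewrite derive1E; case: (is_derive_projection e1 e2 p q c Iu).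
apply: cvgM; first exact: cvg_cst.
by apply: cvgD; apply: cvgM;
  [exact: cvg_cst | exact: continuous_x' | exact: cvg_cst | exact: continuous_y'].
Qed.

Definition gauss_ds (p q lam : R) t :=
  expR (- (((x t - p) ^+ 2 + (y t - q) ^+ 2) / (4 * lam))) * s t.

Lemma gauss_ds_ge0 p q lam t : 0 <= gauss_ds p q lam t.
Proof. by rewrite mulr_ge0 ?expR_ge0 ?speed_ge0. Qed.

Lemma continuous_gauss_ds p q lam t : I t -> {for t, continuous (gauss_ds p q lam)}.
Proof.
move=> It; apply: cvgM; last exact: continuous_speed.
apply: continuous_comp; last exact: continuous_expR.
apply: cvgN; apply: cvgM; last exact: cvg_cst.
apply: cvgD.
- apply: (@continuous_comp _ _ _ (fun u => x u - p) (fun v => v ^+ 2)).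
    by apply: cvgB; [exact: continuous_x | exact: cvg_cst].
  exact: exprn_continuous.
- apply: (@continuous_comp _ _ _ (fun u => y u - q) (fun v => v ^+ 2)).
    by apply: cvgB; [exact: continuous_y | exact: cvg_cst].
  exact: exprn_continuous.
Qed.

Lemma integral_gauss_ds_segment_le (p q lam a b : R) : 0 < lam -> I a -> I b -> a <= b ->
  turning a b <= pi / 4 ->
  (\int[mu]_(t in `[a, b]) (gauss_ds p q lam t)%:E
    <= (8 / 7 * Num.sqrt (4 * lam) * Num.sqrt pi)%:E)%E.
Proof.
move=> lam0 Ia Ib ab turn_ab.
have [[e1 e2] /= e_unit e_cone] := tangent_cone Ia Ib ab turn_ab.
set c := Num.sqrt (4 * lam); have c0 : 0 < c by rewrite sqrtr_gt0 mulr_gt0.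
set P := projection e1 e2 p q c.
have P'E t : I t -> derive1 P t = c^-1 * (e1 * x' t + e2 * y' t).
  by move=> It; rewrite derive1E; case: (is_derive_projection e1 e2 p q c It).
have speed_le t : t \in `[a, b] -> s t <= 8 / 7 * c * derive1 P t.
  move=> tab; rewrite P'E; last exact: segment_sub Ia Ib tab.
  rewrite mulrA -[8 / 7 * c * c^-1]mulrA divff ?gt_eqF // mulr1.
  by have := e_cone t tab; lra.
set g := fun t => expR (- P t ^+ 2) * derive1 P t.
have cg t : I t -> {for t, continuous g}.
  move=> It; apply: cvgM; last exact: continuous_derive1_projection.
  apply: (@continuous_comp _ _ _ P gauss_fun); last exact: continuous_gauss_fun.
  by case: (is_derive_projection e1 e2 p q c It) => /derivable1_continuous.
apply: (@le_trans _ _ (\int[mu]_(t in `[a, b]) ((8 / 7 * c)%:E * (g t)%:E))%E).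
  apply: le_integral => //.
  - exact: integrable_segment Ia Ib (@continuous_gauss_ds p q lam).
  - by apply: integrableZl => //; exact: integrable_segment Ia Ib cg.
  - move=> t /[!inE] tab; rewrite -EFinM lee_fin /g /gauss_ds [X in _ <= X]mulrCA.
    apply: ler_pM; [exact: expR_ge0 | exact: speed_ge0 | | exact: speed_le].
    by rewrite /P /projection; exact: expR_sqr_proj_le.
rewrite integralZl //; last exact: integrable_segment Ia Ib cg.
rewrite [X in (_ <= X)%E]EFinM; apply: lee_wpmul2l; first by rewrite lee_fin mulr_ge0 // ltW.
apply: gauss_comp_integral_le => // t tab; have It := segment_sub Ia Ib tab.
split; first by case: (is_derive_projection e1 e2 p q c It).
- exact: continuous_derive1_projection.
- rewrite P'E //; apply: mulr_gt0; first by rewrite invr_gt0.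
  by apply: lt_le_trans (e_cone t tab); apply: mulr_gt0; [lra | exact: speed_gt0].
Qed.

Lemma integral_gauss_ds_le (p q lam : R) : 0 < lam ->
  (total_curvature I x y <= (pi / 4)%:E)%E ->
  (\int[mu]_(t in I) (gauss_ds p q lam t)%:E
    <= (8 / 7 * Num.sqrt (4 * lam) * Num.sqrt pi)%:E)%E.
Proof.
move=> lam0 total_le.
apply: (ge0_integral_le_segments open_param interval_param).
- by move=> t _; exact: gauss_ds_ge0.
- apply: subspace_continuous_measurable_fun; first exact: is_interval_measurable interval_param.
  by apply: continuous_in_subspaceT => t; rewrite inE; exact: continuous_gauss_ds.
- by rewrite lee_fin !mulr_ge0 ?sqrtr_ge0.
- move=> a b Ia Ib ab; apply: integral_gauss_ds_segment_le => //.
  by rewrite -lee_fin; exact: le_trans (turning_le_total_curvature Ia Ib) total_le.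
Qed.

Lemma Ffun_le (p q lam : R) : 0 < lam ->
  (total_curvature I x y <= (pi / 4)%:E)%E -> (Ffun I x y p q lam <= (8 / 7)%:E)%E.
Proof.
move=> lam0 total_le; rewrite /Ffun.
apply: le_trans (lee_wpmul2l _ (integral_gauss_ds_le p q lam0 total_le)) _.
  by rewrite lee_fin invr_ge0 sqrtr_ge0.
have sqrt_lam : 0 < Num.sqrt (4 * lam) by rewrite sqrtr_gt0 mulr_gt0.
have sqrt_pi : 0 < Num.sqrt pi :> R by rewrite sqrtr_gt0 pi_gt0.
rewrite -EFinM lee_fin [4 * pi * lam]mulrAC sqrtrM ?mulr_ge0 ?(ltW lam0) //.
move: (Num.sqrt (4 * lam)) (Num.sqrt pi) sqrt_lam sqrt_pi => u v u0 v0.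
rewrite (_ : (u * v)^-1 * (8 / 7 * u * v) = 8 / 7) //.
by field; rewrite !gt_eqF.
Qed.

End immersed_curve.

Theorem lemma3p2 (R : realType) (I : set R) (x y : R -> R) :
  C2_immersed_curve I x y ->
  (total_curvature I x y <= (pi / 4)%:E)%E ->
  (Ent I x y <= (Num.sqrt 2)%:E)%E.
Proof.
move=> curveC2 total_le; apply: ge_ereal_sup => _ [p [q [lam [lam0 ->]]]].
apply: le_trans (Ffun_le curveC2 p q lam0 total_le) _.
rewrite lee_fin -(ger0_norm (_ : 0 <= 8 / 7 :> R)) // -sqrtr_sqr ler_sqrt //.
lra.
Qed.
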